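(* Let $G$, $k\ge 3$, the choice strings $c_{i,j}$, the template string $t$, $L$ and $d$ be as in the binary construction in the context, and let $s\in\{0,1\}^L$ be a solution, i.e. $t$ and every choice string $c_{i,j}$ ($1\le i<j\le k$) have a substring of length $L$ at Hamming distance at most $d$ from $s$. Then the encoding part of $s$ contains exactly $k$ symbols $1$, and these correspond to a clique of size $k$ in $G$: for $p=1,\dots,k$ the $p$-th section of the encoding part of $s$ equals $\mathrm{number}(h_p)$ for some $h_p$, and $v_{h_1},\dots,v_{h_k}$ form a clique of size $k$ in $G$.
   Context: Let $G=(V,E)$ be an undirected simple graph with $V=\{v_1,\dots,v_n\}$ and edge set $E=\{e_1,\dots,e_m\}$, and let $k\ge 3$ be an integer; put $N=\binom{k}{2}$ and $b=nk-2k+2$. All strings are over $\{0,1\}$. For $1\le p\le n$ let $\mathrm{number}(p)=0^{p-1}10^{n-p}$. Let $\mathrm{front\_tag}=(1^{3nk}0)^{nk}$ (length $(3nk+1)nk$). Order the pairs $(i,j)$, $1\le i<j\le k$, lexicographically and let $i'$ be the position of $(i,j)$ in this order. For an edge $e$ joining $v_r,v_s$ with $r<s$ let $\mathrm{encode}(i,j,e)=(0^n)^{i-1}\,\mathrm{number}(r)\,(0^n)^{j-i-1}\,\mathrm{number}(s)\,(0^n)^{k-j}$, $\mathrm{back\_tag}(i')=0^{(i'-1)b}1^{b}0^{(N-i')b}$, and $\mathrm{block}(i,j,e)=\mathrm{front\_tag}\,\mathrm{encode}(i,j,e)\,\mathrm{back\_tag}(i')$. The choice string is $c_{i,j}=\mathrm{block}(i,j,e_1)\cdots\mathrm{block}(i,j,e_m)$.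 The template string is $t=\mathrm{front\_tag}\,1^{nk}\,0^{Nb}$. Set $L=(3nk+1)nk+nk+Nb$ and $d=nk-k$. For a string $s$ of length $L$, its encoding part is the substring of its positions $(3nk+1)nk+1,\dots,(3nk+1)nk+nk$, divided into $k$ consecutive sections of length $n$. *)

(* binary strings are [seq bool] (false = 0, true = 1).
   Vertices are v_1..v_n, referred to by their index in 1..n.
   The edge list E = [e_1; ...; e_m] is a list of pairs (r, s) with 1 <= r < s <= n. *)
From mathcomp Require Import all_boot.
Set Implicit Arguments. Unset Strict Implicit. Unset Printing Implicit Defensive.

Definition zeros (l : nat) : seq bool := nseq l false.
Definition ones (l : nat) : seq bool := nseq l true.

Definition numstr (n p : nat) : seq bool := zeros (p - 1) ++ [:: true] ++ zeros (n - p).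

Definition front_tag (n k : nat) : seq bool :=
  flatten (nseq (n * k) (ones (3 * n * k) ++ [:: false])).

Definition Npairs (k : nat) : nat := 'C(k, 2).
Definition bval (n k : nat) : nat := n * k - 2 * k + 2.

Definition pairs (k : nat) : seq (nat * nat) :=
  [seq (i, j) | i <- iota 1 k, j <- iota i.+1 (k - i)].

Definition pair_pos (k i j : nat) : nat := (index (i, j) (pairs k)).+1.

Definition encode (n k i j : nat) (e : nat * nat) : seq bool :=
  flatten (nseq (i - 1) (zeros n)) ++ numstr n e.1 ++
  flatten (nseq (j - i - 1) (zeros n)) ++ numstr n e.2 ++
  flatten (nseq (k - j) (zeros n)).

Definition back_tag (n k i' : nat) : seq bool :=
  zeros ((i' - 1) * bval n k) ++ ones (bval n k) ++ zeros ((Npairs k - i') * bval n k).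

Definition block (n k i j : nat) (e : nat * nat) : seq bool :=
  front_tag n k ++ encode n k i j e ++ back_tag n k (pair_pos k i j).

Definition choice_string (n k : nat) (E : seq (nat * nat)) (i j : nat) : seq bool :=
  flatten [seq block n k i j e | e <- E].

Definition template (n k : nat) : seq bool :=
  front_tag n k ++ ones (n * k) ++ zeros (Npairs k * bval n k).

Definition Llen (n k : nat) : nat :=
  (3 * n * k + 1) * (n * k) + n * k + Npairs k * bval n k.
Definition dval (n k : nat) : nat := n * k - k.

Definition hamming (u v : seq bool) : nat :=
  count (fun p : bool * bool => p.1 != p.2) (zip u v).

Definition has_close_substring (s w : seq bool) (d : nat) : Prop :=
  exists off, off + size s <= size w /\
              hamming s (take (size s) (drop off w)) <= d.

Definition is_solution (n k : nat) (E : seq (nat * nat)) (s : seq bool) : Prop :=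
  size s = Llen n k /\
  has_close_substring s (template n k) (dval n k) /\
  (forall i j, 1 <= i -> i < j -> j <= k ->
     has_close_substring s (choice_string n k E i j) (dval n k)).

Definition encoding_part (n k : nat) (s : seq bool) : seq bool :=
  take (n * k) (drop ((3 * n * k + 1) * (n * k)) s).

Definition section (n k p : nat) (s : seq bool) : seq bool :=
  take n (drop ((p - 1) * n) (encoding_part n k s)).

Definition simple_graph (n : nat) (E : seq (nat * nat)) : Prop :=
  uniq E /\ forall e, e \in E -> 1 <= e.1 /\ e.1 < e.2 /\ e.2 <= n.

Definition adjacent (E : seq (nat * nat)) (x y : nat) : bool :=
  ((x, y) \in E) || ((y, x) \in E).

From mathcomp Require Import all_boot zify.
Set Implicit Arguments. Unset Strict Implicit. Unset Printing Implicit Defensive.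

(* Every choice string c_{i,j} is a concatenation of blocks of length L, and
   s is within d of the template t, so a substring of c_{i,j} within d of s is
   within 2d of t.  Such a substring must be a whole block: a window straddling
   two blocks either slides the periodic front tag (1^{3nk} 0)^{nk} against the
   one of t, which misplaces about 2nk zeros, or lays the sparse rest of a block
   (b + 2 ones) over a run of ones of t, or lays front-tag ones over the final
   zeros of t; each way it is more than 2d away from t.
   An aligned block(i,j,e) is at distance exactly 2d from t, so s agrees with t
   wherever t and the block agree: s has ones at the two positions encoding e,
   and the back part of s vanishes outside slot i'.  The slots of c_{1,2} and
   c_{1,3} are disjoint, hence the back part of s is zero, and then the distance
   from s to a block leaves room for at most k ones in the encoding part.  Each
   of the k sections contains one of the ones found above, so each contains
   exactly one, and these ones spell out a k-clique. *)

Lemma hamming_cons a b u v : hamming (a :: u) (b :: v) = (a != b) + hamming u v.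
Proof. by []. Qed.

Lemma hamming_sym u v : hamming u v = hamming v u.
Proof. by elim: u v => [|a u IH] [|b v] //; rewrite !hamming_cons IH eq_sym. Qed.

Lemma hamming_cat u1 u2 v1 v2 : size u1 = size v1 ->
  hamming (u1 ++ u2) (v1 ++ v2) = hamming u1 v1 + hamming u2 v2.
Proof. by move=> eq_sz; rewrite /hamming zip_cat ?count_cat. Qed.

Lemma hamming_sum u v : size u = size v ->
  hamming u v = \sum_(0 <= x < size u) (nth false u x != nth false v x).
Proof.
elim: u v => [|a u IH] [|b v] //=; first by rewrite big_geq.
by move=> [eq_sz]; rewrite hamming_cons big_nat_recl // IH.
Qed.

Lemma hamming_refl u : hamming u u = 0.
Proof. by elim: u => //= a u IH; rewrite hamming_cons IH eqxx. Qed.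

Lemma hamming_nseq_false u : hamming u (nseq (size u) false) = count id u.
Proof. by elim: u => //= a u IH; rewrite hamming_cons IH; case: a. Qed.

Lemma hamming_nseq_true u : hamming u (nseq (size u) true) = size u - count id u.
Proof.
elim: u => //= a u IH; rewrite hamming_cons IH.
by case: a => /=; have := count_size id u; lia.
Qed.

Lemma count_leq_hamming u v : size u = size v ->
  count id v <= count id u + hamming u v.
Proof.
elim: u v => [|a u IH] [|b v] //= [/IH]; rewrite hamming_cons.
by case: a; case: b => /=; lia.
Qed.

Lemma hamming_triangle u v w : size u = size v -> size u = size w ->
  hamming v w <= hamming u v + hamming u w.
Proof.
elim: u v w => [|a u IH] [|b v] [|c w] //= [eq_uv] [eq_uw].
rewrite !hamming_cons; have := IH _ _ eq_uv eq_uw.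
by case: a; case: b; case: c => /=; lia.
Qed.

Lemma hamming_tight u v w : size u = size v -> size u = size w ->
  hamming u v + hamming u w <= hamming v w ->
  forall x, nth false v x = nth false w x -> nth false u x = nth false v x.
Proof.
elim: u v w => [|a u IH] [|b v] [|c w] //= [eq_uv] [eq_uw].
rewrite !hamming_cons => tight.
have {tight} [tight_head tight_tail] :
    (a != b) + (a != c) <= (b != c) /\ hamming u v + hamming u w <= hamming v w.
  by move: tight (hamming_triangle eq_uv eq_uw); case: a; case: b; case: c => /=; lia.
case=> [|x] /=; last exact: IH.
by move: tight_head; case: a; case: b; case: c.
Qed.

Lemma close_substring_same_size s w d : size s = size w ->
  has_close_substring s w d -> hamming s w <= d.
Proof.
move=> eq_sz [off []]; rewrite eq_sz => fits.
by rewrite (_ : off = 0) ?drop0 ?take_size //; lia.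
Qed.

Lemma nth_flatten_uniform (T : eqType) (x0 : T) (ss : seq (seq T)) m q u :
  {in ss, forall s, size s = m} -> u < m ->
  nth x0 (flatten ss) (q * m + u) = nth x0 (nth [::] ss q) u.
Proof.
elim: ss q => [|s ss IH] q ss_m lt_u /=; first by rewrite !nth_nil.
have ss_m' : {in ss, forall t, size t = m} by move=> t ss_t; rewrite ss_m // inE ss_t orbT.
rewrite nth_cat ss_m ?mem_head //; case: q => [|q] /=; first by rewrite mul0n add0n lt_u.
by rewrite mulSn -addnA ltnNge leq_addr /= addKn IH.
Qed.

Lemma size_flatten_uniform (T : eqType) (ss : seq (seq T)) m :
  {in ss, forall s, size s = m} -> size (flatten ss) = size ss * m.
Proof.
elim: ss => //= s ss IH ss_m; rewrite size_cat ss_m ?mem_head // IH // => t ss_t.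
by rewrite ss_m // inE ss_t orbT.
Qed.

Lemma nth_cat_shift (T : Type) (x0 : T) s1 s2 m y :
  size s1 = m -> nth x0 (s1 ++ s2) (m + y) = nth x0 s2 y.
Proof. by move=> <-; rewrite nth_cat ltnNge leq_addr addKn. Qed.

Lemma count_id_eq0 (u : seq bool) : count id u = 0 -> u = nseq (size u) false.
Proof. by elim: u => //= a u IH; case: a => //= /IH {1}->. Qed.

Lemma size_le_sumn (xs : seq nat) : {in xs, forall x, 0 < x} -> size xs <= sumn xs.
Proof.
elim: xs => //= x xs IH xs_pos; have x_pos := xs_pos x (mem_head x xs).
have /IH : {in xs, forall y, 0 < y} by move=> y xs_y; apply: xs_pos; rewrite inE xs_y orbT.
lia.
Qed.

Lemma sumn_le_size_eq1 (xs : seq nat) : {in xs, forall x, 0 < x} -> sumn xs <= size xs ->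
  {in xs, forall x, x = 1}.
Proof.
elim: xs => //= x xs IH xs_pos le_size; have x_pos := xs_pos x (mem_head x xs).
have xs_pos' : {in xs, forall y, 0 < y} by move=> y xs_y; apply: xs_pos; rewrite inE xs_y orbT.
have := size_le_sumn xs_pos' => le_sum y; rewrite inE => /orP [/eqP ->|xs_y]; first by lia.
by apply: IH => //; lia.
Qed.

Lemma count_id_sum u : count id u = \sum_(0 <= x < size u) nth false u x.
Proof.
rewrite -hamming_nseq_false hamming_sum ?size_nseq //.
by apply: eq_bigr => x _; rewrite nth_nseq if_same; case: nth.
Qed.

Lemma nth_true_size (u : seq bool) y : nth false u y -> y < size u.
Proof. by rewrite ltnNge; apply: contraTN => /(nth_default false) ->. Qed.

Lemma count_id_gt0 (u : seq bool) y : nth false u y -> 0 < count id u.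
Proof.
move=> u_y; rewrite -has_count; apply/hasP; exists (nth false u y) => //.
exact/mem_nth/nth_true_size.
Qed.

Lemma leq_sum_subinterval (f : nat -> nat) a b a' b' : a' <= a -> b <= b' ->
  \sum_(a <= x < b) f x <= \sum_(a' <= x < b') f x.
Proof.
move=> le_a le_b; case: (leqP a b) => [le_ab|lt_ba]; last by rewrite big_geq // ltnW.
rewrite (big_cat_nat le_a (leq_trans le_ab le_b)) (big_cat_nat le_ab le_b) /=.
by rewrite addnCA leq_addr.
Qed.

Lemma sum_interval_sub (f : nat -> nat) a b : a <= b ->
  \sum_(a <= x < b) f x = \sum_(0 <= x < b) f x - \sum_(0 <= x < a) f x.
Proof. by move=> le_ab; rewrite (big_cat_nat (leq0n a) le_ab) addKn. Qed.

Lemma sum_shift (f : nat -> nat) a b :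
  \sum_(a <= x < b) f x = \sum_(0 <= y < b - a) f (y + a).
Proof. by rewrite -{1}(add0n a) big_addn. Qed.

Lemma sum_count_leq_mismatch (f g : nat -> bool) a b :
  \sum_(a <= x < b) g x <= \sum_(a <= x < b) f x + \sum_(a <= x < b) (f x != g x).
Proof.
by rewrite -big_split /= big_nat [X in _ <= X]big_nat leq_sum // => x _; case: (f x); case: (g x).
Qed.

(* Bit [x] of the periodic tag (1^(P-1) 0)^*; the front tag is its prefix of
   length P * nk for P = 3nk + 1. *)
Definition front_bit P x : bool := x %% P != P.-1.

Section FrontBits.

Variable P : nat.
Hypothesis P_gt0 : 0 < P.

Lemma negb_front_bit x : ~~ front_bit P x = (P %| x.+1).
Proof.
rewrite /front_bit negbK /dvdn -addn1 -modnDml.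
have lt_P := ltn_pmod x P_gt0.
case: (ltnP (x %% P).+1 P) => [lt_P1|le_P].
  by rewrite addn1 (modn_small lt_P1); apply/eqP/eqP; lia.
have -> : x %% P + 1 = P by lia.
by rewrite modnn eqxx; apply/eqP; lia.
Qed.

Lemma sum_front_zeros m : \sum_(0 <= x < m) ~~ front_bit P x = m %/ P.
Proof.
elim: m => [|m IH]; first by rewrite big_geq ?div0n.
by rewrite big_nat_recr //= IH divnS // negb_front_bit addnC.
Qed.

Lemma sum_front_ones m : \sum_(0 <= x < m) front_bit P x = m - m %/ P.
Proof.
have total : \sum_(0 <= x < m) front_bit P x + \sum_(0 <= x < m) ~~ front_bit P x = m.
  rewrite -big_split /= (eq_bigr (fun=> 1)) => [|x _]; last by case: front_bit.
  by rewrite sum_nat_const_nat muln1 subn0.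
by rewrite -sum_front_zeros; lia.
Qed.

Lemma front_zeros_in_period x m : m <= P ->
  \sum_(x <= y < x + m) ~~ front_bit P y <= 1.
Proof.
move=> le_mP; rewrite sum_interval_sub ?leq_addr // !sum_front_zeros.
have : (x + m) %/ P < x %/ P + 2.
  rewrite ltn_divLR // mulnDl; have := ltn_ceil x P_gt0; lia.
lia.
Qed.

Lemma front_bit_shift d x : d %% P != 0 ->
  ~~ front_bit P x + ~~ front_bit P (x + d) <= (front_bit P (x + d) != front_bit P x).
Proof.
move=> d_nP.
have apart : P %| x.+1 -> ~~ (P %| (x + d).+1).
  by move=> dvd_x; rewrite -addSn dvdn_addr // /dvdn.
move: apart; rewrite -!negb_front_bit.
by case: (front_bit P x); case: (front_bit P (x + d)) => //= /(_ isT).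
Qed.

End FrontBits.

(** * Misaligned windows are far from the template *)

(* Parameters of the construction: M = nk, P = 3nk + 1, front tag length
   F = P M, length A = M + N b of the rest of a block, block length L = F + A.
   A block is described by the bits [g] of its rest. *)
Section Misaligned.

Variables M k N P F : nat.
Hypotheses (k_ge3 : 3 <= k) (kM : 2 * k <= M) (N_ge3 : 3 <= N).
Hypotheses (P_def : P = 3 * M + 1) (F_def : F = P * M).

Local Notation b := (M - 2 * k + 2).
Local Notation A := (M + N * b).
Local Notation L := (F + A).

Definition template_bit x : bool := if x < F then front_bit P x else x < F + M.

Definition block_bit (g : nat -> bool) u : bool :=
  if u < F then front_bit P u else g (u - F).

Definition window_bit (g1 g2 : nat -> bool) dl x : bool :=
  if dl + x < L then block_bit g1 (dl + x) else block_bit g2 (dl + x - L).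

Lemma template_bit_front x : x < F -> template_bit x = front_bit P x.
Proof. by move=> lt_x; rewrite /template_bit lt_x. Qed.

Lemma template_bit_back x : F + M <= x -> template_bit x = false.
Proof. by move=> le_x; rewrite /template_bit !ltnNge le_x (leq_trans (leq_addr M F)). Qed.

Lemma block_bit_front g u : u < F -> block_bit g u = front_bit P u.
Proof. by move=> lt_u; rewrite /block_bit lt_u. Qed.

Lemma P_gt0 : 0 < P. Proof. by rewrite P_def addn1. Qed.

Lemma leq_3M_F : 3 * M <= F.
Proof. by rewrite F_def P_def; nia. Qed.

Lemma template_ones_in_period x0 m : m <= P -> x0 + m <= F + M ->
  m - 1 <= \sum_(x0 <= x < x0 + m) template_bit x.
Proof.
move=> le_mP le_end.
have cover : \sum_(x0 <= x < x0 + m) 1 <=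
    \sum_(x0 <= x < x0 + m) (template_bit x + ~~ front_bit P x).
  rewrite big_nat [X in _ <= X]big_nat leq_sum // => x /andP [_ lt_x].
  by rewrite /template_bit (leq_trans lt_x le_end); case: ifP => // _; case: front_bit.
rewrite sum_nat_const_nat muln1 addKn big_split /= in cover.
by have := front_zeros_in_period P_gt0 x0 le_mP; lia.
Qed.

Lemma front_shift_mismatch d : 0 < d < F -> d %% P != 0 ->
  2 * M - 2 * (d %/ P) - 1 <= \sum_(0 <= y < F - d) (front_bit P (y + d) != front_bit P y).
Proof.
move=> /andP [d_gt0 lt_dF] d_nP.
have shifted : \sum_(0 <= y < F - d) ~~ front_bit P (y + d) = M - d %/ P.
  rewrite -(sum_shift (fun x => nat_of_bool (~~ front_bit P x)) d F).
  rewrite (sum_interval_sub _ (ltnW lt_dF)) !(sum_front_zeros P_gt0).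
  by rewrite F_def mulKn ?P_gt0.
have head : M - d %/ P - 1 <= (F - d) %/ P.
  rewrite leq_divRL ?P_gt0 // !mulnBl mul1n [M * P]mulnC -F_def.
  have := ltn_ceil d P_gt0; rewrite mulSn; lia.
apply: leq_trans (_ : \sum_(0 <= y < F - d) (~~ front_bit P y + ~~ front_bit P (y + d)) <= _).
  by rewrite big_split /= (sum_front_zeros P_gt0) shifted; lia.
by rewrite big_nat [X in _ <= X]big_nat leq_sum // => y _; rewrite front_bit_shift ?P_gt0.
Qed.

Variables (g1 g2 : nat -> bool) (dl : nat).
Hypotheses (g1_sparse : \sum_(0 <= u < A) g1 u <= b + 2) (dl_gt0 : 0 < dl) (dl_ltL : dl < L).

Local Notation window := (window_bit g1 g2 dl).
Local Notation mismatch lo hi := (\sum_(lo <= x < hi) (window x != template_bit x)).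

Lemma mismatch_subinterval lo hi : hi <= L -> mismatch lo hi <= mismatch 0 L.
Proof. exact: leq_sum_subinterval. Qed.

Lemma window_rest_far x0 m : m <= 3 * M -> x0 + m <= F + M ->
  F <= dl + x0 -> dl + x0 + m <= L -> m - (b + 3) <= mismatch x0 (x0 + m).
Proof.
move=> le_m le_end le_F le_L.
have ones : m - 1 <= \sum_(x0 <= x < x0 + m) template_bit x.
  by apply: template_ones_in_period => //; lia.
have := sum_count_leq_mismatch window template_bit x0 (x0 + m).
have -> : \sum_(x0 <= x < x0 + m) window x = \sum_(0 <= y < m) g1 (dl + x0 - F + y).
  rewrite sum_shift addKn big_nat [RHS]big_nat; apply: eq_bigr => y /andP [_ lt_y].
  rewrite /window_bit ifT; last by lia.
  by rewrite /block_bit ifF; [congr g1; lia | lia].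
have : \sum_(0 <= y < m) g1 (dl + x0 - F + y) <= b + 2.
  apply: leq_trans g1_sparse; set u0 := dl + x0 - F.
  have -> : \sum_(0 <= y < m) g1 (u0 + y) = \sum_(u0 <= u < u0 + m) g1 u.
    by rewrite [RHS]sum_shift addKn; apply: eq_bigr => y _; rewrite addnC.
  by apply: leq_sum_subinterval; lia.
lia.
Qed.

Lemma window_starts_early_in_rest_far : F <= dl -> 3 * M <= L - dl ->
  2 * (M - k) < mismatch 0 L.
Proof.
move=> le_F le_3M.
have far : 3 * M - (b + 3) <= mismatch 0 (3 * M).
  by apply: (@window_rest_far 0) => //; have := leq_3M_F; lia.
have sub : mismatch 0 (3 * M) <= mismatch 0 L by apply: mismatch_subinterval; lia.
lia.
Qed.

Lemma window_starts_late_in_rest_far : F <= dl -> L - dl < 3 * M ->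
  2 * (M - k) < mismatch 0 L.
Proof.
move=> le_F lt_3M; set r := L - dl; have F3M := leq_3M_F.
have shift : 2 * M - 2 * (r %/ P) - 1 <=
    \sum_(0 <= y < F - r) (front_bit P (y + r) != front_bit P y).
  by apply: front_shift_mismatch; rewrite ?modn_small; lia.
have eq_shift : mismatch r F = \sum_(0 <= y < F - r) (front_bit P (y + r) != front_bit P y).
  rewrite sum_shift big_nat [RHS]big_nat; apply: eq_bigr => y /andP [_ lt_y].
  rewrite /window_bit ifF; last by lia.
  rewrite (_ : dl + (y + r) - L = y); last by lia.
  by rewrite block_bit_front ?template_bit_front 1?eq_sym //; lia.
have sub : mismatch r F <= mismatch 0 L by apply: mismatch_subinterval; lia.
rewrite divn_small in shift; lia.
Qed.

Lemma window_shifted_front_far : dl < F -> dl %% P != 0 -> dl %/ P < k ->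
  2 * (M - k) < mismatch 0 L.
Proof.
move=> lt_F dl_nP lt_k.
have shift : 2 * M - 2 * (dl %/ P) - 1 <=
    \sum_(0 <= y < F - dl) (front_bit P (y + dl) != front_bit P y).
  by apply: front_shift_mismatch; rewrite ?dl_gt0.
have eq_shift : mismatch 0 (F - dl) =
    \sum_(0 <= y < F - dl) (front_bit P (y + dl) != front_bit P y).
  rewrite big_nat [RHS]big_nat; apply: eq_bigr => y /andP [_ lt_y].
  rewrite /window_bit ifT; last by lia.
  by rewrite block_bit_front ?template_bit_front 1?(addnC dl) //; lia.
have sub : mismatch 0 (F - dl) <= mismatch 0 L by apply: mismatch_subinterval; lia.
lia.
Qed.

Lemma window_ends_in_next_front_far : P <= dl -> dl <= N * b -> dl < F ->
  2 * (M - k) < mismatch 0 L.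
Proof.
move=> le_P le_Nb lt_F.
have eq_ones : mismatch (L - dl) L = \sum_(0 <= y < dl) front_bit P y.
  rewrite sum_shift (subKn (ltnW dl_ltL)) big_nat [RHS]big_nat.
  apply: eq_bigr => y /andP [_ lt_y].
  rewrite /window_bit ifF; last by lia.
  rewrite (_ : dl + (y + (L - dl)) - L = y); last by lia.
  by rewrite block_bit_front ?template_bit_back ?addn0 //; lia.
rewrite (sum_front_ones P_gt0) in eq_ones.
have periods : 3 * M <= dl - dl %/ P.
  have one_period : 0 < dl %/ P by rewrite divn_gt0 ?P_gt0.
  have := leq_divM dl P; rewrite {2}P_def mulnDr muln1.
  have := leq_pmull (3 * M) one_period; lia.
have sub : mismatch (L - dl) L <= mismatch 0 L by apply: mismatch_subinterval.
lia.
Qed.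

Lemma window_rest_over_ones_far : N * b <= dl -> dl < F ->
  2 * (M - k) < mismatch 0 L.
Proof.
move=> le_Nb lt_F.
have [m [le_m le_mA far_m]] : exists m, [/\ m <= 3 * M, m <= A & 2 * (M - k) < m - (b + 3)].
  have := leq_mul N_ge3 (leqnn b).
  by case: (leqP A (3 * M)) => [le_A|lt_A]; [exists A | exists (3 * M)]; split; lia.
have far : m - (b + 3) <= mismatch (F - dl) (F - dl + m) by apply: window_rest_far; lia.
have sub : mismatch (F - dl) (F - dl + m) <= mismatch 0 L by apply: mismatch_subinterval; lia.
lia.
Qed.

Lemma misaligned_window_far : 2 * (M - k) < mismatch 0 L.
Proof.
case: (leqP F dl) => [le_F|lt_F].
  case: (leqP (3 * M) (L - dl)) => [le_3M|lt_3M].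
    exact: window_starts_early_in_rest_far.
  exact: window_starts_late_in_rest_far.
case: (boolP ((dl %% P != 0) && (dl %/ P < k))) => [/andP [dl_nP lt_k]|early].
  exact: window_shifted_front_far.
have le_P : P <= dl.
  rewrite leqNgt; apply/negP => lt_P; move: early.
  by rewrite modn_small // divn_small // -lt0n dl_gt0 (leq_trans _ k_ge3).
case: (leqP dl (N * b)) => [le_Nb|lt_Nb].
  exact: window_ends_in_next_front_far.
exact: window_rest_over_ones_far (ltnW lt_Nb) lt_F.
Qed.

End Misaligned.

(** * The strings of the construction *)

Lemma nth_numstr n p y : nth false (numstr n p) y = (y == p - 1).
Proof.
rewrite /numstr /zeros nth_cat size_nseq nth_nseq if_same.
case: (ltnP y (p - 1)) => [lt_y|le_y]; first by rewrite ltn_eqF.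
case y_off : (y - (p - 1)) => [|z] /=; first by apply/esym/eqP; lia.
by rewrite nth_nseq if_same; apply/esym/eqP; lia.
Qed.

Lemma size_numstr n p : 0 < p <= n -> size (numstr n p) = n.
Proof. by move=> p_ok; rewrite /numstr !size_cat !size_nseq /=; lia. Qed.

Lemma count1_numstr (u : seq bool) : count id u = 1 -> u = numstr (size u) (index true u).+1.
Proof.
elim: u => //= a u IH; case: a => /= [[/count_id_eq0 u0]|/IH {1}->].
  by rewrite /numstr subn1 /= subn1 /= {1}u0.
by rewrite /numstr !subn1 /= subSS.
Qed.

Lemma count1_index (u : seq bool) y : count id u = 1 -> nth false u y -> index true u = y.
Proof. by move=> cnt; rewrite {1}(count1_numstr cnt) nth_numstr subn1 /= => /eqP ->. Qed.

Section Construction.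

Variables n k : nat.

Local Notation M := (n * k).
Local Notation P := (3 * n * k + 1).
Local Notation F := ((3 * n * k + 1) * (n * k)).
Local Notation N := (Npairs k).
Local Notation b := (bval n k).
Local Notation L := (Llen n k).

Lemma flatten_zeros m : flatten (nseq m (zeros n)) = zeros (m * n).
Proof. by elim: m => //= m ->; rewrite /zeros -nseqD mulSn. Qed.

Lemma size_front_tag : size (front_tag n k) = F.
Proof.
rewrite /front_tag (size_flatten_uniform (m := P)) ?size_nseq 1?mulnC // => u /nseqP [-> _].
by rewrite size_cat size_nseq.
Qed.

Lemma nth_front_tag x : nth false (front_tag n k) x = (x < F) && front_bit P x.
Proof.
have P_gt0 : 0 < P by rewrite addn1.
rewrite /front_tag {1}(divn_eq x P) nth_flatten_uniform ?ltn_pmod //; last first.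
  by move=> u /nseqP [-> _]; rewrite size_cat size_nseq.
rewrite nth_nseq ltn_divLR // [_ * P]mulnC; case: ifP => _; last by rewrite nth_nil.
rewrite nth_cat size_nseq nth_nseq /front_bit addn1 /=.
have := ltn_pmod x P_gt0; rewrite addn1 ltnS leq_eqVlt.
case/orP => [/eqP->|lt_x]; first by rewrite ltnn subnn eqxx.
by rewrite lt_x (ltn_eqF lt_x).
Qed.

Lemma size_template : size (template n k) = L.
Proof. by rewrite /template !size_cat size_front_tag !size_nseq addnA. Qed.

Lemma nth_template x : nth false (template n k) x = template_bit M P F x.
Proof.
rewrite /template /template_bit nth_cat size_front_tag nth_front_tag.
case: ifP => [->|ge_x] //; rewrite nth_cat size_nseq nth_nseq /zeros nth_nseq if_same.
have -> : (x < F + M) = (x - F < M) by apply/idP/idP; lia.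
by case: (x - F < M).
Qed.

Lemma size_back_tag i' : 0 < i' <= N -> size (back_tag n k i') = N * b.
Proof.
move=> i'_ok; rewrite /back_tag !size_cat !size_nseq addnA -mulSnr -mulnDl; congr (_ * _); lia.
Qed.

Lemma count_back_tag i' : count id (back_tag n k i') = b.
Proof. by rewrite /back_tag !count_cat !count_nseq /= mul0n mul1n addn0. Qed.

Lemma nth_back_tag i' z :
  nth false (back_tag n k i') z = ((i' - 1) * b <= z < (i' - 1) * b + b).
Proof.
rewrite /back_tag nth_cat size_nseq /zeros nth_nseq if_same.
case: ltnP => [//|le_z] /=.
rewrite nth_cat size_nseq nth_nseq if_same; case: ifP => [lt_z|ge_z].
  by rewrite nth_nseq lt_z; apply/esym; lia.
by apply/esym/negbTE; lia.
Qed.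

Lemma size_pairs : size (pairs k) = N.
Proof.
rewrite /pairs size_allpairs_dep sumnE big_map /Npairs -bin2_sum.
rewrite (eq_bigr (fun i => k - i)) => [|i _]; last by rewrite size_iota.
have -> : iota 1 k = index_iota 1 k.+1 by rewrite /index_iota subn1.
rewrite big_nat_rev add1n big_add1 /= big_nat [RHS]big_nat.
by apply: eq_bigr => i /andP [_ lt_i]; lia.
Qed.

Lemma pair_pos_range i j : 0 < i -> i < j -> j <= k -> 0 < pair_pos k i j <= N.
Proof.
move=> i_gt0 lt_ij le_jk; rewrite /pair_pos ltnS -size_pairs index_mem.
by apply/allpairsPdep; exists i, j; rewrite !mem_iota; split => //; lia.
Qed.

Lemma pair_pos_first : 3 <= k -> pair_pos k 1 2 = 1 /\ pair_pos k 1 3 = 2.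
Proof. by case: k => [|[|[|k']]]. Qed.

Section Pair.

Variables (i j : nat) (e : nat * nat).
Hypotheses (i_gt0 : 0 < i) (lt_ij : i < j) (le_jk : j <= k).
Hypothesis e_ok : 1 <= e.1 /\ e.1 < e.2 /\ e.2 <= n.

Local Notation rest := (encode n k i j e ++ back_tag n k (pair_pos k i j)).

Lemma size_encode : size (encode n k i j e) = M.
Proof.
rewrite /encode !size_cat !flatten_zeros !size_nseq /=.
have -> : e.1 - 1 + (1 + (n - e.1)) = n by lia.
have -> : e.2 - 1 + (1 + (n - e.2)) = n by lia.
rewrite !addnA -mulSnr -mulnDl -mulSnr -mulnDl mulnC; congr (_ * _); lia.
Qed.

Lemma count_encode : count id (encode n k i j e) = 2.
Proof. by rewrite /encode !flatten_zeros !count_cat !count_nseq /= !mul0n. Qed.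

Lemma nth_encode_fst : nth false (encode n k i j e) ((i - 1) * n + (e.1 - 1)).
Proof.
rewrite /encode flatten_zeros (nth_cat_shift _ _ _ (size_nseq _ _)).
have lt_e1 : e.1 - 1 < n by lia.
by rewrite nth_cat size_numstr ?lt_e1 ?nth_numstr ?eqxx //; lia.
Qed.

Lemma nth_encode_snd : nth false (encode n k i j e) ((j - 1) * n + (e.2 - 1)).
Proof.
have -> : (j - 1) * n + (e.2 - 1) = (i - 1) * n + (n + ((j - i - 1) * n + (e.2 - 1))).
  by rewrite !addnA -mulSnr -mulnDl; congr (_ * _ + _); lia.
rewrite /encode !flatten_zeros (nth_cat_shift _ _ _ (size_nseq _ _)).
rewrite (nth_cat_shift _ _ _ (_ : size (numstr n e.1) = n)) ?size_numstr //; last by lia.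
rewrite (nth_cat_shift _ _ _ (size_nseq _ _)).
have lt_e2 : e.2 - 1 < n by lia.
by rewrite nth_cat size_numstr ?lt_e2 ?nth_numstr ?eqxx //; lia.
Qed.

Lemma size_block : size (block n k i j e) = L.
Proof.
rewrite /block size_cat size_front_tag size_cat size_encode size_back_tag ?pair_pos_range //.
by rewrite /Llen !addnA.
Qed.

Lemma size_block_rest : size rest = M + N * b.
Proof. by rewrite size_cat size_encode size_back_tag ?pair_pos_range. Qed.

Lemma count_block_rest : count id rest = b + 2.
Proof. by rewrite count_cat count_encode count_back_tag addnC. Qed.

Lemma nth_block u : nth false (block n k i j e) u = block_bit P F (nth false rest) u.
Proof.
rewrite /block /block_bit nth_cat size_front_tag nth_front_tag.
by case: (u < F).
Qed.

Lemma nth_block_encode y : y < M ->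
  nth false (block n k i j e) (F + y) = nth false (encode n k i j e) y.
Proof.
by move=> lt_y; rewrite /block (nth_cat_shift _ _ _ size_front_tag) nth_cat size_encode lt_y.
Qed.

Lemma nth_block_back z :
  nth false (block n k i j e) (F + (M + z)) = nth false (back_tag n k (pair_pos k i j)) z.
Proof.
by rewrite /block (nth_cat_shift _ _ _ size_front_tag) (nth_cat_shift _ _ _ size_encode).
Qed.

Lemma hamming_template_block : 2 <= n ->
  hamming (template n k) (block n k i j e) = 2 * dval n k.
Proof.
move=> n_ge2; rewrite /template /block !hamming_cat ?size_front_tag ?size_nseq ?size_encode //.
rewrite hamming_refl hamming_sym -[in hamming _ (ones M)]size_encode hamming_nseq_true.
rewrite hamming_sym -(size_back_tag (pair_pos_range i_gt0 lt_ij le_jk)) hamming_nseq_false.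
rewrite size_encode count_encode count_back_tag /dval /bval.
have : 2 * k <= M by rewrite leq_mul2r n_ge2 orbT.
lia.
Qed.

Lemma count_encoding_part_block s : size s = L ->
  count id (encoding_part n k s) + b <=
  hamming s (block n k i j e) + 2 + count id (drop M (drop F s)).
Proof.
move=> s_L; set sE := encoding_part n k s; set sB := drop M (drop F s).
have sF_size : size (take F s) = F by rewrite size_takel // s_L /Llen -addnA leq_addr.
have sE_size : size sE = M by rewrite size_takel // size_drop s_L /Llen -addnA addKn leq_addr.
have sE_enc : size sE = size (encode n k i j e) by rewrite size_encode.
have sB_back : size sB = size (back_tag n k (pair_pos k i j)).
  by rewrite !size_drop s_L /Llen -addnA addKn addKn size_back_tag ?pair_pos_range.
have -> : s = take F s ++ sE ++ sB by rewrite !cat_take_drop.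
rewrite /block !hamming_cat ?size_front_tag ?size_encode //.
have := count_leq_hamming (esym sE_enc); have := count_leq_hamming sB_back.
rewrite count_encode count_back_tag [hamming (encode _ _ _ _ _) _]hamming_sym; lia.
Qed.

End Pair.

Lemma nth_template_encoding y : y < M -> nth false (template n k) (F + y).
Proof. by move=> lt_y; rewrite nth_template /template_bit ltn_add2l lt_y ltnNge leq_addr. Qed.

Lemma nth_template_back z : nth false (template n k) (F + (M + z)) = false.
Proof. by rewrite nth_template template_bit_back // addnA leq_addr. Qed.

Lemma nth_encoding_part s y : y < M -> nth false (encoding_part n k s) y = nth false s (F + y).
Proof. by move=> lt_y; rewrite nth_take // nth_drop. Qed.

Lemma nth_section s p y : y < n ->
  nth false (section n k p s) y = nth false (encoding_part n k s) ((p - 1) * n + y).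
Proof. by move=> lt_y; rewrite /section nth_take // nth_drop. Qed.

Lemma LlenE : L = F + (M + N * b).
Proof. by rewrite /Llen addnA. Qed.

Lemma Npairs_ge3 : 3 <= k -> 3 <= N.
Proof. by move=> k3; apply: (leq_bin2l 2 k3). Qed.

Lemma Llen_gt0 : 3 <= k -> 0 < L.
Proof.
by move=> /Npairs_ge3 N3; have := leq_mul N3 (leq_addl _ 2 : 2 <= b); rewrite LlenE; lia.
Qed.

Section Choice.

Variables (E : seq (nat * nat)) (i j : nat).
Hypothesis E_ok : {in E, forall e, 1 <= e.1 /\ e.1 < e.2 /\ e.2 <= n}.
Hypotheses (n_ge2 : 2 <= n) (k_ge3 : 3 <= k).
Hypotheses (i_gt0 : 0 < i) (lt_ij : i < j) (le_jk : j <= k).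

Local Notation c := (choice_string n k E i j).
Local Notation rest e := (encode n k i j e ++ back_tag n k (pair_pos k i j)).

Lemma blocks_size : {in [seq block n k i j e | e <- E], forall w, size w = L}.
Proof. by move=> w /mapP [e e_E ->]; apply: size_block => //; apply: E_ok. Qed.

Lemma size_choice_string : size c = size E * L.
Proof. by rewrite /choice_string (size_flatten_uniform blocks_size) size_map. Qed.

Lemma nth_choice_string q u : q < size E -> u < L ->
  nth false c (q * L + u) = nth false (block n k i j (nth (0, 0) E q)) u.
Proof.
by move=> q_E u_L; rewrite /choice_string (nth_flatten_uniform _ _ blocks_size) // (nth_map (0, 0)).
Qed.

Lemma misaligned_window_far_from_template q dl : q.+1 < size E -> 0 < dl < L ->
  2 * dval n k < hamming (take L (drop (q * L + dl) c)) (template n k).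
Proof.
move=> q1_E /andP [dl_gt0 dl_L].
have e_ok := E_ok (mem_nth (0, 0) (ltnW q1_E)).
have c_size := size_choice_string.
have w_size : size (take L (drop (q * L + dl) c)) = L.
  rewrite size_takel // size_drop c_size.
  by have := leq_mul q1_E (leqnn L); rewrite !mulSn; lia.
rewrite hamming_sum ?size_template // w_size.
have g1_sparse : \sum_(0 <= u < M + N * b) nth false (rest (nth (0, 0) E q)) u <= b + 2.
  by rewrite -(size_block_rest i_gt0 lt_ij le_jk e_ok) -count_id_sum count_block_rest.
have kM : 2 * k <= M by rewrite leq_mul2r n_ge2 orbT.
have P_def : P = 3 * M + 1 by rewrite mulnA.
have dl_L' : dl < F + (M + N * b) by rewrite -LlenE.
have := misaligned_window_far k_ge3 kM (Npairs_ge3 k_ge3) P_def erefl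
  (nth false (rest (nth (0, 0) E q.+1))) g1_sparse dl_gt0 dl_L'.
rewrite -LlenE /dval; congr (_ < _); rewrite big_nat [RHS]big_nat.
apply: eq_bigr => x /andP [_ x_L]; rewrite nth_template nth_take // nth_drop -addnA.
rewrite /window_bit -LlenE; case: ifP => [lt_L|ge_L].
  by rewrite nth_choice_string ?nth_block //; lia.
rewrite (_ : q * L + (dl + x) = q.+1 * L + (dl + x - L)); last by rewrite mulSn; lia.
by rewrite nth_choice_string ?nth_block //; lia.
Qed.

Lemma close_substring_is_block s : size s = L -> hamming s (template n k) <= dval n k ->
  has_close_substring s c (dval n k) ->
  exists2 e, e \in E & hamming s (block n k i j e) <= dval n k.
Proof.
move=> s_L s_t [off []]; rewrite s_L => fits close.
have L_gt0 := Llen_gt0 k_ge3.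
have c_size := size_choice_string; have lt_dl := ltn_pmod off L_gt0.
move: fits close; rewrite (divn_eq off L); set q := off %/ L; set dl := off %% L => fits close.
have w_size : size (take L (drop (q * L + dl) c)) = L by rewrite size_takel // size_drop; lia.
case: (posnP dl) => [dl0|dl_gt0].
  have q_E : q < size E by rewrite -(ltn_pmul2r L_gt0) -c_size; lia.
  exists (nth (0, 0) E q); first exact: mem_nth.
  suff <- : take L (drop (q * L + dl) c) = block n k i j (nth (0, 0) E q) by [].
  have e_ok := E_ok (mem_nth (0, 0) q_E).
  apply: (@eq_from_nth _ false) => [|x]; rewrite w_size ?size_block // => x_L.
  by rewrite nth_take // nth_drop dl0 addn0 nth_choice_string.
have q1_E : q.+1 < size E by rewrite -(ltn_pmul2r L_gt0) -c_size mulSn; lia.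
have := misaligned_window_far_from_template q1_E (introT andP (conj dl_gt0 lt_dl)).
have := hamming_triangle (_ : size s = size (take L (drop (q * L + dl) c)))
  (_ : size s = size (template n k)); rewrite s_L size_template w_size; lia.
Qed.

End Choice.

End Construction.

(** * A solution encodes a clique *)

Section Solution.

Variables (n k : nat) (E : seq (nat * nat)) (s : seq bool).
Hypotheses (graph_E : simple_graph n E) (k_ge3 : 3 <= k) (solution_s : is_solution n k E s).

Local Notation M := (n * k).
Local Notation F := ((3 * n * k + 1) * (n * k)).
Local Notation sE := (encoding_part n k s).
Local Notation sB := (drop M (drop F s)).

Lemma solution_size : size s = Llen n k.
Proof. by case: solution_s. Qed.

Lemma solution_template : hamming s (template n k) <= dval n k.
Proof.
case: solution_s => s_L [t_close _].
by apply: close_substring_same_size t_close; rewrite size_template.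
Qed.

Lemma solution_n_ge2 : 2 <= n.
Proof.
case: solution_s => s_L [_ /(_ 1 2 isT isT (ltnW k_ge3)) [off []]].
case: E graph_E => [|e E'] [_ E_ok] /=.
  by rewrite /choice_string /= s_L; have := Llen_gt0 n k_ge3; lia.
by have := E_ok e (mem_head e E'); lia.
Qed.

Lemma solution_pair i j : 0 < i -> i < j -> j <= k -> exists2 e, e \in E &
  [/\ nth false sE ((i - 1) * n + (e.1 - 1)), nth false sE ((j - 1) * n + (e.2 - 1)),
      forall z, ~~ nth false (back_tag n k (pair_pos k i j)) z -> ~~ nth false sB z
    & count id sE + bval n k <= dval n k + 2 + count id sB].
Proof.
move=> i_gt0 lt_ij le_jk; have [_ E_ok] := graph_E.
have [e e_E close_blk] := close_substring_is_block E_ok solution_n_ge2 k_ge3 i_gt0 lt_ij le_jk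
  solution_size solution_template (solution_s.2.2 i j i_gt0 lt_ij le_jk).
have e_ok := E_ok e e_E.
(* d(t, block) = 2d, so s lies on a geodesic from t to the block. *)
have agree : forall x, nth false (template n k) x = nth false (block n k i j e) x ->
    nth false s x = nth false (template n k) x.
  apply: hamming_tight; rewrite ?solution_size ?size_template ?size_block //.
  by rewrite hamming_template_block ?solution_n_ge2 //; have := solution_template; lia.
have encoded y : nth false (encode n k i j e) y -> nth false sE y.
  move=> enc_y; have := nth_true_size enc_y; rewrite size_encode // => lt_y.
  by rewrite nth_encoding_part // agree nth_template_encoding // nth_block_encode.
exists e => //; split.
- exact/encoded/(nth_encode_fst i_gt0 lt_ij le_jk e_ok).
- exact/encoded/(nth_encode_snd i_gt0 lt_ij le_jk e_ok).
- move=> z back_z; rewrite !nth_drop agree ?nth_template_back //.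
  by rewrite nth_block_back // (negbTE back_z).
have := count_encoding_part_block i_gt0 lt_ij le_jk e_ok solution_size; lia.
Qed.

Lemma solution_back_part_empty : count id sB = 0.
Proof.
(* The back-tag slots of c_{1,2} and c_{1,3} are disjoint. *)
have [pos12 pos13] := pair_pos_first k_ge3.
have [e12 _ [_ _ back12 _]] := solution_pair (isT : 0 < 1) (isT : 1 < 2) (ltnW k_ge3).
have [e13 _ [_ _ back13 _]] := solution_pair (isT : 0 < 1) (isT : 1 < 3) k_ge3.
rewrite pos12 in back12; rewrite pos13 in back13.
rewrite count_id_sum big_nat big1 // => z _; apply/eqP; rewrite eqb0.
by case: (ltnP z (bval n k)) => [lt_b|ge_b]; [apply: back13 | apply: back12];
  rewrite nth_back_tag; apply/negP; lia.
Qed.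

Lemma count_encoding_part_le : count id sE <= k.
Proof.
have [e _ [_ _ _]] := solution_pair (isT : 0 < 1) (isT : 1 < 2) (ltnW k_ge3).
have kM : 2 * k <= M by rewrite leq_mul2r solution_n_ge2 orbT.
by rewrite solution_back_part_empty /dval /bval; lia.
Qed.

Lemma size_encoding_part : size sE = M.
Proof. by rewrite size_takel // size_drop solution_size /Llen -addnA addKn leq_addr. Qed.

Lemma size_section p : 0 < p <= k -> size (section n k p s) = n.
Proof.
move=> p_ok; rewrite size_takel // size_drop size_encoding_part leq_subRL.
  by rewrite -mulSnr mulnC leq_mul2l; apply/orP; right; lia.
by rewrite mulnC leq_mul2l; apply/orP; right; lia.
Qed.

Lemma encoding_part_sections : sE = flatten [seq section n k p s | p <- iota 1 k].
Proof.
rewrite -{1}(@reshapeKr _ (nseq k n) sE); last by rewrite sumn_nseq size_encoding_part mulnC.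
congr flatten; apply: (@eq_from_nth _ [::]) => [|p].
  by rewrite size_reshape size_map size_iota size_nseq.
rewrite size_reshape size_nseq => lt_p.
rewrite nth_reshape (nth_map 0) ?size_iota // nth_iota // nth_nseq lt_p.
by rewrite take_nseq ?(ltnW lt_p) // sumn_nseq /section add1n subn1 mulnC.
Qed.

Lemma count_section_gt0 p : 0 < p <= k -> 0 < count id (section n k p s).
Proof.
case/andP => p_gt0 le_pk; case: (graph_E) => _ E_ok.
case: (ltnP 1 p) => [lt_1p|le_p1].
  have [e e_E [_ sE_p _ _]] := solution_pair (isT : 0 < 1) lt_1p le_pk.
  by apply: (@count_id_gt0 _ (e.2 - 1)); rewrite nth_section //; have := E_ok e e_E; lia.
have [e e_E [sE_1 _ _ _]] := solution_pair (isT : 0 < 1) (isT : 1 < 2) (ltnW k_ge3).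
rewrite (_ : p = 1) in sE_1 *; last by lia.
by apply: (@count_id_gt0 _ (e.1 - 1)); rewrite nth_section //; have := E_ok e e_E; lia.
Qed.

Lemma sumn_count_sections : sumn [seq count id (section n k p s) | p <- iota 1 k] = count id sE.
Proof. by rewrite [in RHS]encoding_part_sections count_flatten -map_comp. Qed.

Lemma count_sections_gt0 : {in [seq count id (section n k p s) | p <- iota 1 k], forall c, 0 < c}.
Proof. by move=> c /mapP [p]; rewrite mem_iota add1n ltnS => p_ok ->; apply: count_section_gt0. Qed.

Lemma count_encoding_part : count id sE = k.
Proof.
apply/eqP; rewrite eqn_leq count_encoding_part_le -sumn_count_sections.
by have := size_le_sumn count_sections_gt0; rewrite size_map size_iota.
Qed.

Lemma count_section p : 0 < p <= k -> count id (section n k p s) = 1.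
Proof.
move=> p_ok; apply: (sumn_le_size_eq1 count_sections_gt0).
  by rewrite sumn_count_sections count_encoding_part size_map size_iota.
by apply: map_f; rewrite mem_iota add1n ltnS.
Qed.

End Solution.

Theorem proposition4 (n k : nat) (E : seq (nat * nat)) (s : seq bool) :
  simple_graph n E -> 3 <= k -> is_solution n k E s ->
  count id (encoding_part n k s) = k /\
  exists h : nat -> nat,
    (forall p, 1 <= p <= k -> 1 <= h p <= n /\ section n k p s = numstr n (h p)) /\
    (forall p q, 1 <= p -> p < q -> q <= k -> h p != h q /\ adjacent E (h p) (h q)).
Proof.
move=> graph_E k_ge3 solution_s.
have count1 := count_section graph_E k_ge3 solution_s.
have size_n := size_section k_ge3 solution_s.
split; first exact: count_encoding_part graph_E k_ge3 solution_s.
exists (fun p => (index true (section n k p s)).+1); split.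
  move=> p p_ok; split; last by rewrite {1}(count1_numstr (count1 p p_ok)) size_n.
  rewrite -[X in index _ _ < X](size_n p p_ok) index_mem -has_pred1 has_count.
  by rewrite (@eq_count _ _ id) ?count1 // => b; case: b.
move=> p q p_gt0 lt_pq le_qk; have [_ E_ok] := graph_E.
have [e e_E [sE_p sE_q _ _]] := solution_pair graph_E k_ge3 solution_s p_gt0 lt_pq le_qk.
have [e1_gt0 [lt_e12 le_e2n]] := E_ok e e_E.
rewrite (@count1_index _ (e.1 - 1)) ?count1 ?nth_section //; try lia.
rewrite (@count1_index _ (e.2 - 1)) ?count1 ?nth_section //; try lia.
rewrite !subn1 !prednK //; last by lia.
by rewrite ltn_eqF // /adjacent -surjective_pairing e_E.
Qed.
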